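(* Let $q$ be a prime power, $n$ a positive integer, $L(x)=\sum_{i=0}^{n-1}a_ix^{q^{2i}}$ with $a_i\in\mathbb F_{q^{2n}}$, and suppose $\sigma_L$ is $\lambda$-Hermitian for some $\lambda\in\mathbb F_{q^2}$. Let $r=n-\dim\ker L$, and for $c\in\mathbb F_{q^2}$ let $N_c$ be the number of $u\in\mathbb F_{q^{2n}}$ with $\mathrm{Tr}(uL(u^q))+c=0$. Then \[N_c=\begin{cases}q^{2n-1}+(-1)^r(q-1)q^{2n-r-1}&\text{if }c=0,\\ q^{2n-1}+(-1)^{r-1}q^{2n-r-1}&\text{if }c^{q-1}=\lambda,\\ 0&\text{otherwise.}\end{cases}\]
   Context: $\mathrm{Tr}$ is the trace $\mathbb F_{q^{2n}}\to\mathbb F_{q^2}$ and $\sigma_L(u,v)=\mathrm{Tr}(uL(v^q))$. For a sesquilinear form $\sigma$, $\sigma^*(u,v)=\sigma(v,u)^q$, and $\sigma$ is $\lambda$-Hermitian if $\sigma^*=\lambda\sigma$. $\ker L$ is the kernel of the induced $\mathbb F_{q^2}$-linear map on $\mathbb F_{q^{2n}}$, dimension over $\mathbb F_{q^2}$. *)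

From HB Require Import structures.
From mathcomp Require Import all_boot all_order all_algebra all_field.
Set Implicit Arguments. Unset Strict Implicit. Unset Printing Implicit Defensive.
Import GRing.Theory.
Local Open Scope ring_scope.

(* Setting: K = F_{q^2} (a finite field of order q^2), F = F_{q^{2n}} a field
   extension of K of dimension n over K. *)
Section Defs.
Variables (K : finFieldType) (F : fieldExtType K) (q n : nat).

(* Tr : F_{q^{2n}} -> F_{q^2}, x |-> sum_{i<n} x^{q^{2i}} (values lie in the
   image of K in F). *)
Definition Tr (x : F) : F := \sum_(i < n) x ^+ (q ^ (2 * i)).

Definition Lpoly (a : 'I_n -> F) (x : F) : F :=
  \sum_(i < n) a i * x ^+ (q ^ (2 * i)).

Definition sigmaL (a : 'I_n -> F) (u v : F) : F := Tr (u * Lpoly a (v ^+ q)).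

(* sigma^*(u,v) = sigma(v,u)^q ; sigma is lambda-Hermitian iff sigma^* = lambda sigma *)
Definition is_lambda_hermitian (a : 'I_n -> F) (lam : K) : Prop :=
  forall u v : F, (sigmaL a v u) ^+ q = lam%:A * sigmaL a u v.

Definition kerL (a : 'I_n -> F) : {vspace F} := lker (linfun (Lpoly a)).

Definition Ncount (a : 'I_n -> F) (c : K) : nat :=
  #|[pred u : finvect_type F | Tr (u * Lpoly a (u ^+ q)) + c%:A == 0]|.

End Defs.

(* sigma_L takes its values in F_{q^2}, where it is a lambda-Hermitian
   sesquilinear form B on F_{q^2n} over F_{q^2}; its radical {v | L(v^q) = 0}
   is the image of ker L under the bijection v |-> v^(q^(2n-1)), so it has
   dimension n - r.
   The number of u with B(u, u) = t is computed by induction on the dimension of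
   a subspace S.  If B(u, u) = 0 on S, polarising with a scalar k such that
   k^q != k shows that B vanishes on S.  Otherwise some w has a := B(w, w) != 0,
   S splits as K w + (w^perp in S), and B(k w + v, k w + v) = N(k) a + B(v, v)
   where the norm N(k) = k^(q+1) takes each nonzero value of F_q exactly q + 1
   times; the closed formula satisfies the same recursion. *)

From HB Require Import structures.
From mathcomp Require Import all_boot all_order all_algebra all_field.
From mathcomp Require Import zify ring.
Set Implicit Arguments. Unset Strict Implicit. Unset Printing Implicit Defensive.
Import GRing.Theory.
Local Open Scope ring_scope.

Lemma card_expr_eq_le (R : finFieldType) (m : nat) (c : R) :
  (0 < m)%N -> (#|[pred x : R | x ^+ m == c]| <= m)%N.
Proof.
move=> m_gt0; have p_neq0 : ('X^m - c%:P : {poly R}) != 0.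
  by rewrite -size_poly_eq0 size_XnsubC.
have := max_poly_roots p_neq0 (_ : all _ (enum [pred x : R | x ^+ m == c])).
rewrite size_XnsubC // ltnS cardE; apply; last exact: enum_uniq.
by apply/allP => x; rewrite mem_enum inE rootE !hornerE => /eqP->; rewrite subrr.
Qed.

Lemma fibers_full (T U : finType) (f : T -> U) (A : {pred T}) (B : {pred U})
    (c : nat) :
  {in A, forall x, f x \in B} -> (#|B| * c <= #|A|)%N ->
  (forall y, #|[pred x in A | f x == y]| <= c)%N ->
  {in B, forall y, #|[pred x in A | f x == y]| = c}.
Proof.
move=> fAB cardAB fiber_le; pose fiber y := #|[pred x in A | f x == y]|.
have cardA : #|A| = (\sum_(y in B) fiber y)%N.
  rewrite -sum1_card (partition_big f [in B] fAB).
  by apply: eq_bigr => y _; rewrite sum1dep_card; apply: eq_card => x; rewrite inE.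
have fiber_sum := leqif_sum (fun y (_ : y \in B) => leqif_eq (fiber_le y)).
have /forall_inP all_full : [forall (y | y \in B), fiber y == c].
  rewrite -fiber_sum.2 eqn_leq fiber_sum.1 -cardA.
  by rewrite (leq_trans _ cardAB) // sum_nat_const.
by move=> y /all_full/eqP.
Qed.

Section NormFibers.
Variables (K : finFieldType) (q : nat).
Hypothesis cardK : #|K| = (q ^ 2)%N.

Lemma q2_gt1 : (1 < q ^ 2)%N.
Proof. by rewrite -cardK; apply/card_gt1P; exists 0, 1; split; rewrite // eq_sym oner_neq0. Qed.

Lemma q_gt1 : (1 < q)%N.
Proof. by have := q2_gt1; case: q => [|[|]]. Qed.

Lemma expr_card2 (k : K) : k ^+ (q ^ 2) = k.
Proof. by rewrite -cardK expf_card. Qed.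

Lemma frobenius_fixed_unit (k : K) : k != 0 -> k ^+ q = k -> k ^+ (q - 1) = 1.
Proof.
move=> k_neq0; have -> : q = (q - 1).+1 by have := q_gt1; lia.
by rewrite subSS subn0 exprSr => fixed_k; apply: (mulIf k_neq0); rewrite mul1r.
Qed.

Lemma card_unit_roots_le : (#|[pred x : K | x ^+ (q - 1) == 1%R]| <= q - 1)%N.
Proof. by apply: card_expr_eq_le; rewrite subn_gt0 q_gt1. Qed.

Lemma frobenius_nonfixed : exists k : K, k ^+ q != k.
Proof.
apply/existsP; apply: contraT; rewrite negb_exists => /forallP all_fixed.
have unit_root : {subset predC1 (0 : K) <= [pred x : K | x ^+ (q - 1) == 1]}.
  move=> x; rewrite !inE => x_neq0.
  by rewrite frobenius_fixed_unit // (eqP (negbNE (all_fixed x))).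
have := leq_trans (subset_leq_card (introT subsetP unit_root)) card_unit_roots_le.
by rewrite cardC1 cardK expnS expn1; have := q_gt1; nia.
Qed.

Lemma norm_neq0_unit (k : K) : k != 0 -> (k ^+ q.+1) ^+ (q - 1) = 1.
Proof.
move=> k_neq0; apply: (mulIf k_neq0); rewrite mul1r -exprM -exprSr.
have -> : (q.+1 * (q - 1)).+1 = (q ^ 2)%N by have := q_gt1; rewrite expnS expn1; nia.
exact: expr_card2.
Qed.

(* The q^2 - 1 = (q - 1)(q + 1) nonzero elements are spread over at most q - 1
   fibers of the norm, each of size at most q + 1: all these fibers are full. *)
Lemma card_norm_fiber (s : K) :
  s ^+ (q - 1) = 1 -> #|[pred k : K | k ^+ q.+1 == s]| = q.+1.
Proof.
move=> s_unit; pose units := [pred x : K | x ^+ (q - 1) == 1].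
have s_neq0 : s != 0.
  by apply: contra_eq_neq s_unit => ->; rewrite expr0n subn_eq0 leqNgt q_gt1 eq_sym oner_eq0.
have norm_unit : {in predC1 0, forall k : K, k ^+ q.+1 \in units}.
  by move=> k; rewrite !inE => /norm_neq0_unit->.
have card_units : (#|units| * q.+1 <= #|predC1 (0%R : K)|)%N.
  rewrite cardC1 cardK (leq_trans (leq_mul card_unit_roots_le (leqnn _))) //.
  by rewrite expnS expn1; have := q_gt1; nia.
have fiber_le (y : K) : (#|[pred k in predC1 0%R | k ^+ q.+1 == y]| <= q.+1)%N.
  rewrite (leq_trans (subset_leq_card _) (card_expr_eq_le y _)) //.
  by apply/subsetP => k /andP[].
have s_in : s \in units by rewrite inE s_unit.
rewrite -[RHS](fibers_full norm_unit card_units fiber_le s_in).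
apply: eq_card => k; rewrite !inE andb_idl // => /eqP k_norm.
by apply: contra_neq s_neq0 => k0; rewrite -k_norm k0 expr0n.
Qed.

End NormFibers.

Lemma sumr_if (T : finType) (R : zmodType) (P : pred T) (x y : R) :
  \sum_(i : T) (if P i then x else y) = y *+ #|T| + (x - y) *+ #|P|.
Proof.
rewrite (eq_bigr (fun i => y + (if P i then x - y else 0))) => [|i _]; last first.
  by case: (P i); rewrite ?addr0 // addrC subrK.
by rewrite big_split /= -big_mkcond !sumr_const.
Qed.

Section HermitianForm.
Variables (K : finFieldType) (q : nat) (lam : K).
Hypotheses (cardK : #|K| = (q ^ 2)%N) (qK : [pchar K].-nat q).

Lemma frobeniusB (x y : K) : (x - y) ^+ q = x ^+ q - y ^+ q.
Proof. by rewrite exprDn_pchar // exprNn_pchar. Qed.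

Lemma norm_frobenius (k : K) : (k ^+ q.+1) ^+ q = k ^+ q.+1.
Proof. by rewrite -exprM mulSn mulnn exprD expr_card2 // -exprSr. Qed.

Lemma card_norm_mul_eq (a t : K) : a != 0 -> a ^+ q = lam * a -> t ^+ q = lam * t ->
  #|[pred k : K | k ^+ q.+1 * a == t]| = if t == 0 then 1%N else q.+1.
Proof.
move=> a_neq0 a_herm t_herm; have lam_neq0 : lam != 0.
  by apply: contra_neq a_neq0 => lam0; move/eqP: a_herm; rewrite lam0 mul0r expf_eq0 => /andP[_ /eqP].
case: eqP => [->|/eqP t_neq0].
  rewrite -(card1 (0 : K)); apply: eq_card => k.
  by rewrite !inE mulf_eq0 (negbTE a_neq0) orbF expf_eq0.
rewrite -[RHS](card_norm_fiber cardK (s := t / a)).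
  by apply: eq_card => k; rewrite !inE (can2_eq (mulfK a_neq0) (divfK a_neq0)).
apply: (frobenius_fixed_unit cardK); first by rewrite mulf_neq0 ?invr_eq0.
by rewrite exprMn exprVn t_herm a_herm invfM mulrACA mulfV // mul1r.
Qed.

(* q times the number of solutions of B u u = t in a space of dimension m whose
   radical has dimension d; the factor q keeps the formula integral for m = 0. *)
Definition hermitian_count (m d : nat) (t : K) : int :=
  if t == 0 then q%:Z ^+ (2 * m) + (-1) ^+ (m - d) * (q%:Z - 1) * q%:Z ^+ (m + d)
  else if t ^+ q == lam * t then q%:Z ^+ (2 * m) - (-1) ^+ (m - d) * q%:Z ^+ (m + d)
  else 0.

Lemma hermitian_count_recursion (m d : nat) (a t : K) :
  (d <= m)%N -> a != 0 -> a ^+ q = lam * a ->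
  \sum_(k : K) hermitian_count m d (t - k ^+ q.+1 * a) = hermitian_count m.+1 d t.
Proof.
move=> le_dm a_neq0 a_herm.
have norm_herm k : (k ^+ q.+1 * a) ^+ q = lam * (k ^+ q.+1 * a).
  by rewrite exprMn norm_frobenius a_herm mulrCA.
have [t_herm|t_nherm] := eqVneq (t ^+ q) (lam * t); last first.
  have t_neq0 : t != 0.
    by apply: contra_neq t_nherm => ->; rewrite expr0n gtn_eqF ?mulr0 // ltnW // (q_gt1 cardK).
  rewrite /hermitian_count (negbTE t_neq0) (negbTE t_nherm) big1 // => k _.
  rewrite subr_eq0; case: eqP => [t_eq|_]; first by rewrite t_eq norm_herm eqxx in t_nherm.
  by rewrite frobeniusB norm_herm mulrBr subr_eq subrK (negbTE t_nherm).
set A := q%:Z ^+ (2 * m); set Y := q%:Z ^+ (m + d); set s := (-1 : int) ^+ (m - d).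
rewrite (eq_bigr (fun k => if k ^+ q.+1 * a == t then A + s * (q%:Z - 1) * Y else A - s * Y)).
  rewrite sumr_if cardK card_norm_mul_eq // /hermitian_count t_herm eqxx.
  rewrite mulnS exprD addSn [_ ^+ (m + d).+1]exprS subSn // [_ ^+ (m - d).+1]exprS.
  by case: eqP => _; ring.
move=> k _; rewrite /hermitian_count subr_eq0 eq_sym; case: eqP => // _.
by rewrite frobeniusB t_herm norm_herm -mulrBr eqxx.
Qed.

Lemma hermitian_countN (m d : nat) (c : K) : (0 < m)%N -> (d <= m)%N ->
  let r := (m - d)%N in
  hermitian_count m d (- c) = q%:Z *
    (if c == 0 then
       (q ^ (2 * m - 1))%:Z + (-1) ^+ r * (q - 1)%:Z * (q ^ (2 * m - r - 1))%:Z
     else if c ^+ (q - 1) == lam then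
       (q ^ (2 * m - 1))%:Z + (-1) ^+ r.+1 * (q ^ (2 * m - r - 1))%:Z
     else 0).
Proof.
move=> m_gt0 le_dm r; have q_gt1 := q_gt1 cardK.
have exprZ_pred k : (0 < k)%N -> q%:Z ^+ k = q%:Z * (q ^ (k - 1))%:Z.
  by case: k => // k _; rewrite subn1 -!natz natrX exprS.
have -> : (2 * m - r - 1 = m + d - 1)%N by rewrite /r; lia.
rewrite /hermitian_count oppr_eq0 (exprZ_pred (2 * m)%N) ?muln_gt0 //.
rewrite (exprZ_pred (m + d)%N) ?addn_gt0 ?m_gt0 // subzn ?(ltnW q_gt1) //.
case: eqP => [_|/eqP c_neq0]; first by ring.
have -> : ((- c) ^+ q == lam * - c) = (c ^+ (q - 1) == lam).
  rewrite exprNn_pchar // mulrN eqr_opp -[in c ^+ q](subnK (ltnW q_gt1)) addn1 exprSr.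
  by apply/eqP/eqP => [/(mulIf c_neq0)|->].
by case: ifP => _; [rewrite exprS; ring | rewrite mulr0].
Qed.

Variables (V : finLmodType K) (B : V -> V -> K).
Hypothesis formZDl : forall k u1 u2 v, B (k *: u1 + u2) v = k * B u1 v + B u2 v.
Hypothesis formZDr : forall k u v1 v2, B u (k *: v1 + v2) = k ^+ q * B u v1 + B u v2.
Hypothesis form_hermitian : forall u v, B v u ^+ q = lam * B u v.

Lemma form0l v : B 0 v = 0.
Proof.
have := formZDl 1 0 0 v; rewrite scaler0 addr0 mul1r => B0v.
by apply: (addIr (B 0 v)); rewrite add0r -B0v.
Qed.

Lemma form0r u : B u 0 = 0.
Proof.
have := formZDr 1 u 0 0; rewrite scaler0 addr0 expr1n mul1r => Bu0.
by apply: (addIr (B u 0)); rewrite add0r -Bu0.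
Qed.

Lemma formDl u1 u2 v : B (u1 + u2) v = B u1 v + B u2 v.
Proof. by have := formZDl 1 u1 u2 v; rewrite scale1r mul1r. Qed.

Lemma formZl k u v : B (k *: u) v = k * B u v.
Proof. by have := formZDl k u 0 v; rewrite !addr0 form0l addr0. Qed.

Lemma formDr u v1 v2 : B u (v1 + v2) = B u v1 + B u v2.
Proof. by have := formZDr 1 u v1 v2; rewrite scale1r expr1n mul1r. Qed.

Lemma formZr k u v : B u (k *: v) = k ^+ q * B u v.
Proof. by have := formZDr k u v 0; rewrite !addr0 form0r addr0. Qed.

Lemma form_orth_sym u v : B u v = 0 -> B v u = 0.
Proof.
move=> Buv; have /eqP := form_hermitian u v.
by rewrite Buv mulr0 expf_eq0 => /andP[_ /eqP].
Qed.

Definition level_card (S : {set V}) (t : K) := #|[set u in S | B u u == t]|.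
Definition rad (S : {set V}) := [set v in S | [forall u in S, B u v == 0]].
Definition orth (S : {set V}) (w : V) := [set v in S | B v w == 0].

Lemma form_eq0_isotropic (S : {set V}) :
  submod_closed S -> {in S, forall u, B u u = 0} -> {in S &, forall u v, B u v = 0}.
Proof.
move=> [S0 S_lin] isoS u v uS vS.
have skew x y : x \in S -> y \in S -> B x y = - B y x.
  move=> xS yS; have := isoS _ (S_lin 1 _ _ xS yS).
  by rewrite scale1r formDl !formDr !isoS // add0r addr0 => /eqP; rewrite addr_eq0 => /eqP.
have [k k_nonfixed] := frobenius_nonfixed cardK.
have kuS : k *: u \in S by rewrite -[k *: u]addr0 S_lin.
move/eqP: (skew _ _ kuS vS); rewrite formZl formZr (skew v u) // mulrN opprK.
by rewrite -subr_eq0 -mulrBl mulf_eq0 subr_eq0 eq_sym (negbTE k_nonfixed) => /eqP.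
Qed.

Section Orthogonal.
Variables (S : {set V}) (w : V).
Hypotheses (S_closed : submod_closed S) (wS : w \in S) (w_aniso : B w w != 0).

Lemma orth_closed : submod_closed (orth S w).
Proof.
case: S_closed => S0 S_lin; split; first by rewrite inE S0 form0l eqxx.
move=> k u v; rewrite !inE => /andP[uS /eqP uw] /andP[vS /eqP vw].
by rewrite S_lin // formZDl uw vw mulr0 addr0 eqxx.
Qed.

Lemma orth_decomp u : u \in S -> u - (B u w / B w w) *: w \in orth S w.
Proof.
case: S_closed => _ S_lin uS; rewrite inE addrC -scaleNr S_lin //=.
by rewrite formZDl mulNr divfK // addNr.
Qed.

Lemma card_orth_split (P : pred V) :
  #|[set u in S | P u]| = (\sum_(k : K) #|[set v in orth S w | P (k *: w + v)%R]|)%N.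
Proof.
case: S_closed => _ S_lin.
rewrite -sum1_card (partition_big (fun u => B u w / B w w) predT) //=.
apply: eq_bigr => k _; rewrite sum1dep_card.
rewrite -[in RHS](card_imset _ (@addrI V (k *: w))); apply: eq_card => u; rewrite !inE.
apply/idP/imsetP => [/andP[/andP[uS Pu] /eqP uk]|[v]].
  exists (u - k *: w); last by rewrite (addrC (k *: w)) subrK.
  by rewrite inE (addrC (k *: w)) subrK Pu andbT -uk orth_decomp.
rewrite !inE => /andP[/andP[vS /eqP vw] Pv] ->.
by rewrite S_lin // Pv formZDl vw addr0 mulfK ?eqxx.
Qed.

Lemma form_diag_orth k v :
  v \in orth S w -> B (k *: w + v) (k *: w + v) = k ^+ q.+1 * B w w + B v v.
Proof.
rewrite inE => /andP[_ /eqP vw]; have wv := form_orth_sym vw.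
by rewrite formZDl !formZDr vw wv !mulr0 !addr0 add0r exprS mulrA.
Qed.

Lemma level_card_orth t :
  level_card S t = (\sum_(k : K) level_card (orth S w) (t - k ^+ q.+1 * B w w)%R)%N.
Proof.
rewrite /level_card card_orth_split; apply: eq_bigr => k _.
apply: eq_card => v; rewrite !inE; apply: andb_id2l => vW.
by rewrite form_diag_orth ?inE // [RHS]eq_sym subr_eq eq_sym addrC.
Qed.

Lemma card_orth : #|S| = (#|K| * #|orth S w|)%N.
Proof.
transitivity #|[set u in S | predT u]|; first by apply: eq_card => u; rewrite !inE andbT.
rewrite card_orth_split -sum_nat_const; apply: eq_bigr => k _.
by apply: eq_card => v; rewrite !inE andbT.
Qed.

Lemma rad_orth : rad (orth S w) = rad S.
Proof.
apply/setP => v; rewrite !inE.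
apply/andP/andP => [[/andP[vS /eqP vw] /forall_inP radv] | [vS /forall_inP radv]].
  split=> //; apply/forall_inP => u uS; have := radv _ (orth_decomp uS).
  by rewrite addrC -scaleNr formZDl (form_orth_sym vw) mulr0 add0r.
split; first by rewrite vS (form_orth_sym (eqP (radv w wS))) eqxx.
by apply/forall_inP => u; rewrite inE => /andP[uS _]; apply: radv.
Qed.

End Orthogonal.

Lemma level_card_isotropic (S : {set V}) (m d : nat) t :
  submod_closed S -> #|S| = ((q ^ 2) ^ m)%N -> #|rad S| = ((q ^ 2) ^ d)%N ->
  {in S, forall u, B u u = 0} -> (q * level_card S t)%:Z = hermitian_count m d t.
Proof.
move=> S_closed cardS card_rad isoS.
have rad_full : rad S = S.
  apply/setP => v; rewrite inE; apply: andb_idr => vS.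
  by apply/forall_inP => u uS; rewrite (form_eq0_isotropic S_closed isoS).
have -> : d = m.
  by apply: (expnI (q2_gt1 cardK)); rewrite -card_rad -cardS rad_full.
have -> : level_card S t = if t == 0 then #|S| else 0%N.
  rewrite /level_card; case: eqP => [->|/eqP t_neq0].
    by apply: eq_card => u; rewrite inE; apply: andb_idr => /isoS->.
  apply/eqP; rewrite cards_eq0; apply/eqP/setP => u; rewrite !inE.
  by apply/andP => -[/isoS-> /eqP/esym/eqP]; apply/negP.
rewrite /hermitian_count subnn expr0 mul1r addnn -mul2n cardS -expnM.
by case: eqP => _; [rewrite -!natz natrM natrX; ring | rewrite muln0 mul1r subrr if_same].
Qed.

Lemma level_card_orth_step (S : {set V}) (w : V) (m d : nat) :
  submod_closed S -> w \in S -> B w w != 0 -> (d <= m)%N ->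
  (forall t, (q * level_card (orth S w) t)%:Z = hermitian_count m d t) ->
  forall t, (q * level_card S t)%:Z = hermitian_count m.+1 d t.
Proof.
move=> S_closed wS w_aniso le_dm orth_count t.
rewrite (level_card_orth S_closed wS w_aniso) big_distrr /= -natz natr_sum.
rewrite -(hermitian_count_recursion t le_dm w_aniso (form_hermitian w w)).
by apply: eq_bigr => k _; rewrite natz orth_count.
Qed.

Lemma level_cardE (m : nat) (S : {set V}) (d : nat) t :
  submod_closed S -> #|S| = ((q ^ 2) ^ m)%N -> #|rad S| = ((q ^ 2) ^ d)%N ->
  (q * level_card S t)%:Z = hermitian_count m d t.
Proof.
elim: m S d t => [|m IHm] S d t S_closed cardS card_rad.
all: have [/exists_inP[w wS w_aniso] | /exists_inPn isoS] :=
  boolP [exists u in S, B u u != 0]; last by apply: level_card_isotropic => // u /isoS/negPn/eqP.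
  have /card_le1_eqP S_triv : (#|S| <= 1)%N by rewrite cardS.
  by move: w_aniso; rewrite -(S_triv _ _ wS S_closed.1) form0l eqxx.
have card_orthS : #|orth S w| = ((q ^ 2) ^ m)%N.
  apply/eqP; rewrite -(eqn_pmul2l (ltnW (q2_gt1 cardK))) -cardK.
  by rewrite -card_orth // cardS expnS cardK.
have le_dm : (d <= m)%N.
  rewrite -(leq_exp2l _ _ (q2_gt1 cardK)) -card_orthS -card_rad.
  rewrite -(rad_orth S_closed wS w_aniso).
  by apply/subset_leq_card/subsetP => v; rewrite inE => /andP[].
apply: (level_card_orth_step S_closed wS w_aniso le_dm) => t'.
apply: IHm; [exact: orth_closed | exact: card_orthS | by rewrite rad_orth].
Qed.

End HermitianForm.

Section TraceForm.
Variables (K : finFieldType) (F : fieldExtType K) (q n : nat).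
Hypotheses (cardK : #|K| = (q ^ 2)%N) (qK : [pchar K].-nat q).
Hypotheses (n_gt0 : (0 < n)%N) (dimF : \dim {:F} = n).

Local Notation V := (finvect_type F).

Lemma pchar_nat_expqF j : [pchar F].-nat (q ^ j)%N.
Proof. by rewrite pnatX (eq_pnat _ (pchar_lalg F)) qK. Qed.

Lemma frobeniusDF j (x y : F) : (x + y) ^+ (q ^ j) = x ^+ (q ^ j) + y ^+ (q ^ j).
Proof. exact: exprDn_pchar (pchar_nat_expqF j). Qed.

Lemma frobenius0F j : (0 : F) ^+ (q ^ j) = 0.
Proof. by rewrite expr0n expn_eq0 (gtn_eqF (ltnW (q_gt1 cardK))). Qed.

Lemma frobenius_sumF (I : finType) (f : I -> F) j :
  (\sum_i f i) ^+ (q ^ j) = \sum_i f i ^+ (q ^ j).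
Proof. exact: (big_morph _ (frobeniusDF j) (frobenius0F j)). Qed.

Lemma card_F : #|V| = ((q ^ 2) ^ n)%N.
Proof. by rewrite -(card_vspacef (Vector.class V)) card_vspace cardK dimF. Qed.

Lemma expr_card_F (x : F) : x ^+ ((q ^ 2) ^ n) = x.
Proof. by rewrite -card_F (expf_card (x : V)). Qed.

Lemma frobenius_fixedK j (k : K) : k ^+ (q ^ (2 * j)) = k.
Proof.
rewrite expnM; elim: j => [|j IHj]; first exact: expr1.
by rewrite expnSr exprM IHj -cardK expf_card.
Qed.

Lemma alg_frobenius_fixed (x : F) : x ^+ (q ^ 2) = x -> exists k : K, x = k%:A.
Proof.
move=> x_fixed; pose P := map_poly (in_alg F) ('X^#|K| - 'X).
have : root P x.
  by rewrite /P rmorphB /= map_polyXn map_polyX rootE !(hornerE, hornerXn) cardK x_fixed subrr.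
have -> : P = \prod_(z <- [seq k%:A | k : K]) ('X - z%:P).
  rewrite /P finField_genPoly rmorph_prod big_image /=.
  by apply: eq_bigr => k _; rewrite rmorphB /= map_polyX map_polyC.
by rewrite root_prod_XsubC => /mapP[k _ ->]; exists k.
Qed.

Lemma trace_frobenius (x : F) : Tr q n x ^+ (q ^ 2) = Tr q n x.
Proof.
rewrite /Tr frobenius_sumF.
rewrite (eq_bigr (fun i : 'I_n => x ^+ (q ^ (2 * i.+1)))) => [|i _]; last first.
  by rewrite -exprM -expnD mulnS addnC.
have := expr_card_F x; rewrite -expnM; case: n n_gt0 => // n' _ x_fixed.
by rewrite big_ord_recr big_ord_recl /= x_fixed muln0 expr1 addrC.
Qed.

Lemma traceD (x y : F) : Tr q n (x + y) = Tr q n x + Tr q n y.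
Proof. by rewrite /Tr -big_split; apply: eq_bigr => i _; rewrite frobeniusDF. Qed.

Lemma traceZ (k : K) (x : F) : Tr q n (k *: x) = k *: Tr q n x.
Proof. by rewrite /Tr scaler_sumr; apply: eq_bigr => i _; rewrite exprZn frobenius_fixedK. Qed.

Lemma trace_neq0 : exists z : F, Tr q n z != 0.
Proof.
case: (pickP [pred z : V | Tr q n z != 0]) => [z z_nz | trace0]; first by exists z.
exfalso; case: n n_gt0 trace0 card_F => // n' _ trace0 cardF.
pose P : {poly F} := \sum_(i < n'.+1) 'X^(q ^ (2 * i)).
pose N := (q ^ (2 * n'))%N.
have lower_lt : (size ((\sum_(i < n') 'X^(q ^ (2 * i)))%R : {poly F}) < size ('X^N : {poly F}))%N.
  rewrite size_polyXn ltnS (leq_trans (size_sum _ _ _)) //; apply/bigmax_leqP => i _.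
  by rewrite size_polyXn ltn_exp2l ?(q_gt1 cardK) // ltn_pmul2l.
have sizeP : size P = N.+1 by rewrite /P big_ord_recr /= addrC size_polyDl // size_polyXn.
have P_neq0 : P != 0 by rewrite -size_poly_eq0 sizeP.
have roots : all (root P) (enum V).
  apply/allP => x _; rewrite rootE horner_sum; under eq_bigr do rewrite hornerXn.
  exact: negbFE (trace0 x).
have := max_poly_roots P_neq0 roots (enum_uniq _).
rewrite sizeP (_ : size (enum V) = #|V|); last by rewrite cardE.
by rewrite cardF ltnS -expnM leq_exp2l ?(q_gt1 cardK) // leq_pmul2l // ltnn.
Qed.

Variables (a : 'I_n -> F) (lam : K).
Hypothesis L_hermitian : is_lambda_hermitian q a lam.

Lemma Lpoly_linear : linear (Lpoly q a).
Proof.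
move=> k x y; rewrite /Lpoly scaler_sumr -big_split; apply: eq_bigr => i _.
by rewrite frobeniusDF exprZn frobenius_fixedK mulrDr scalerAr.
Qed.

HB.instance Definition _ := GRing.isLinear.Build K F F *:%R (Lpoly q a) Lpoly_linear.

(* sigma_L takes its values in the image of K (see sigmaKE); sigmaK reads them in K. *)
Definition sigmaK (u v : F) : K := odflt 0 [pick k : K | k%:A == sigmaL q a u v].

Lemma sigmaKE u v : (sigmaK u v)%:A = sigmaL q a u v.
Proof.
have [k k_trace] := alg_frobenius_fixed (trace_frobenius (u * Lpoly q a (v ^+ q))).
by rewrite /sigmaK; case: pickP => [k' /eqP //| /(_ k)]; rewrite /sigmaL k_trace eqxx.
Qed.

Lemma sigmaK_ZDl k u1 u2 v : sigmaK (k *: u1 + u2) v = k * sigmaK u1 v + sigmaK u2 v.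
Proof.
apply: (fmorph_inj (in_alg F)); rewrite rmorphD rmorphM /= !sigmaKE.
by rewrite /sigmaL mulrDl traceD -scalerAl traceZ mulr_algl.
Qed.

Lemma sigmaK_ZDr k u v1 v2 :
  sigmaK u (k *: v1 + v2) = k ^+ q * sigmaK u v1 + sigmaK u v2.
Proof.
apply: (fmorph_inj (in_alg F)); rewrite rmorphD rmorphM /= !sigmaKE /sigmaL.
have := frobeniusDF 1 (k *: v1) v2; rewrite expn1 => ->.
by rewrite exprZn linearD linearZ /= mulrDr traceD -scalerAr traceZ mulr_algl.
Qed.

Lemma sigmaK_hermitian u v : sigmaK v u ^+ q = lam * sigmaK u v.
Proof.
apply: (fmorph_inj (in_alg F)); rewrite rmorphM rmorphXn /= !sigmaKE.
exact: L_hermitian.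
Qed.

Lemma rad_sigmaK : @rad K V sigmaK [set: V] = [set v : V | Lpoly q a (v ^+ q) == 0].
Proof.
apply/setP => v; rewrite !inE; apply/forall_inP/eqP => [rad_v | Lv0 u _].
  have [z z_neq0] := trace_neq0; apply: contraNeq z_neq0 => L_neq0.
  have := rad_v (z / Lpoly q a (v ^+ q)) (in_setT _).
  by rewrite -(fmorph_eq0 (in_alg F)) /= sigmaKE /sigmaL divfK.
apply/eqP/(fmorph_inj (in_alg F)); rewrite /= sigmaKE /sigmaL Lv0 mulr0 scale0r.
by rewrite /Tr big1 // => i _; apply: frobenius0F.
Qed.

Lemma frobeniusK : cancel (fun x : V => x ^+ q) (fun x => x ^+ (q ^ (2 * n).-1)).
Proof. by move=> x; rewrite -exprM -expnS prednK ?muln_gt0 // expnM expr_card_F. Qed.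

Lemma frobeniusVK : cancel (fun x : V => x ^+ (q ^ (2 * n).-1)) (fun x => x ^+ q).
Proof. by move=> x; rewrite -exprM -expnSr prednK ?muln_gt0 // expnM expr_card_F. Qed.

Lemma card_rad_sigmaK : #|@rad K V sigmaK [set: V]| = ((q ^ 2) ^ \dim (kerL q a))%N.
Proof.
rewrite -cardK -(card_vspace (kerL q a : {vspace V})) rad_sigmaK.
rewrite -(card_imset _ (can_inj frobeniusK)); apply: eq_card => y.
rewrite memv_ker lfunE /=; apply/imsetP/idP => [[v] | Ly0].
  by rewrite inE => /eqP Lv0 ->; apply/eqP.
by exists (y ^+ (q ^ (2 * n).-1)); rewrite ?inE (frobeniusVK y).
Qed.

Lemma Ncount_level_card (c : K) : Ncount q a c = @level_card K V sigmaK [set: V] (- c).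
Proof.
apply: eq_card => u; rewrite !inE -[Tr _ _ _]/(sigmaL q a u u) -sigmaKE.
by rewrite -!in_algE -rmorphD fmorph_eq0 addr_eq0.
Qed.

End TraceForm.

Lemma pchar_nat_sqrt_card (K : finFieldType) (p e q : nat) :
  prime p -> q = (p ^ e)%N -> #|K| = (q ^ 2)%N -> [pchar K].-nat q.
Proof.
move=> p_prime -> cardK; have pK : p \in [pchar K].
  by apply: (card_finPcharP (n := (e * 2)%N)); rewrite // cardK -expnM.
by rewrite (eq_pnat _ (pcharf_eq pK)) pnatX pnat_id.
Qed.

Theorem corollary4p2 (p e q n : nat) (K : finFieldType) (F : fieldExtType K)
    (a : 'I_n -> F) (lam : K) (c : K) :
  prime p -> (0 < e)%N -> q = (p ^ e)%N -> #|K| = (q ^ 2)%N ->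
  (0 < n)%N -> \dim {:F} = n ->
  is_lambda_hermitian q a lam ->
  let r := (n - \dim (kerL q a))%N in
  (Ncount q a c)%:Z =
    (if c == 0 then
       (q ^ (2 * n - 1))%:Z + (-1) ^+ r * (q - 1)%:Z * (q ^ (2 * n - r - 1))%:Z
     else if c ^+ (q - 1) == lam then
       (q ^ (2 * n - 1))%:Z + (-1) ^+ r.+1 * (q ^ (2 * n - r - 1))%:Z
     else 0).
Proof.
move=> p_prime _ q_pe cardK n_gt0 dimF L_herm r.
have qK := pchar_nat_sqrt_card p_prime q_pe cardK.
have le_dn : (\dim (kerL q a) <= n)%N by rewrite -[leqRHS]dimF dimvS ?subvf.
have q_neq0 : q%:Z != 0 by rewrite eqz_nat -lt0n ltnW // (q_gt1 cardK).
apply: (mulfI q_neq0); rewrite -hermitian_countN // -PoszM Ncount_level_card //.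
apply: level_cardE => //.
- exact: sigmaK_ZDl.
- exact: sigmaK_ZDr.
- exact: sigmaK_hermitian.
- by split=> [|k u v]; rewrite !in_setT.
- by rewrite cardsT (card_F cardK dimF).
- exact: (card_rad_sigmaK cardK qK n_gt0 dimF).
Qed.
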